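(* Let $G=(V,E)$ be a finite, simple, connected reflective graph, let $x\sim y$ be adjacent vertices and $z\in V$. Then there exist $x',y'\in B_1(z)$ with $x'\sim y'$ and $(x,y)\parallel(x',y')$.
   Context: $d$ is the combinatorial distance and $B_1(z)=\{v: d(v,z)\leq 1\}$. For adjacent $x\sim y$ let $V_x^y=\{v: d(v,x)<d(v,y)\}$, $V^{xy}=\{v:d(v,x)=d(v,y)\}$. A reflection from $x$ to $y$ is a graph automorphism $\phi$ with $\phi\circ\phi=\mathrm{id}$, $\phi(x)=y$, such that the edges between $V_x^y$ and $V_y^x$ are exactly $\{\{x',\phi(x')\}:x'\in V_x^y\}$ and $\phi$ fixes $V^{xy}$ pointwise. $G$ is reflective if every edge admits a reflection. For edges $x\sim y$, $x'\sim y'$ we write $(x,y)\parallel(x',y')$ if $x'\in V_x^y$ and $y'\in V_y^x$. *)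

From mathcomp Require Import all_boot.
Set Implicit Arguments. Unset Strict Implicit. Unset Printing Implicit Defensive.

(* A finite simple graph: vertex type T : finType, adjacency e : rel T,
   assumed symmetric and irreflexive in the theorem. *)

Definition walkn (T : finType) (e : rel T) (n : nat) (x y : T) : bool :=
  [exists p : n.-tuple T, path e x p && (last x p == y)].

(* combinatorial (shortest-path) distance; for a connected graph every
   distance is < #|T|, so the search over iota 0 #|T| is exhaustive.
   (Returns #|T| if y is unreachable from x.) *)
Definition dist (T : finType) (e : rel T) (x y : T) : nat :=
  find (fun n => walkn e n x y) (iota 0 #|T|).

Definition connected (T : finType) (e : rel T) : Prop :=
  forall x y : T, connect e x y.

Definition ball1 (T : finType) (e : rel T) (z : T) : {set T} :=
  [set v | dist e v z <= 1].

Definition Vside (T : finType) (e : rel T) (x y : T) : {set T} :=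
  [set v | dist e v x < dist e v y].

Definition Vmid (T : finType) (e : rel T) (x y : T) : {set T} :=
  [set v | dist e v x == dist e v y].

Definition is_automorphism (T : finType) (e : rel T) (phi : T -> T) : Prop :=
  bijective phi /\ forall u v, e (phi u) (phi v) = e u v.

Definition reflection (T : finType) (e : rel T) (x y : T) (phi : T -> T) : Prop :=
  [/\ is_automorphism e phi,
      (forall u, phi (phi u) = u),
      phi x = y,
      (* edges between V_x^y and V_y^x are exactly {x', phi x'}, x' in V_x^y *)
      (forall u v, u \in Vside e x y -> v \in Vside e y x ->
          e u v = (v == phi u)) /\
      (forall u, u \in Vside e x y -> phi u \in Vside e y x) &
      (forall v, v \in Vmid e x y -> phi v = v)].

Definition reflective (T : finType) (e : rel T) : Prop :=
  forall x y, e x y -> exists phi : T -> T, reflection e x y phi.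

Definition parallel (T : finType) (e : rel T) (x y x' y' : T) : Prop :=
  x' \in Vside e x y /\ y' \in Vside e y x.

From mathcomp Require Import all_boot.
Set Implicit Arguments. Unset Strict Implicit. Unset Printing Implicit Defensive.

(* If z lies in V_x^y, the edge {z, phi z} given by the reflection phi from
   x to y works, and symmetrically for V_y^x.  Otherwise z is in V^{xy}, fixed by phi, and it
   suffices to find a neighbour c of z in V_x^y: then {c, phi c} works.  Such
   a c is found by induction along a geodesic from z to x.  If the next vertex
   w is in V^{xy} and has a neighbour a in V_x^y, let b = phi a and let psi be
   the reflection from w to z.  Unless z ~ a, both a and b lie in V_w^z, and
   c = psi a is a neighbour of z.  If c were in V_y^x, the edge a ~ c would
   force c = b, which is on the wrong side of {w, z}; if c were in V^{xy}, it
   would be fixed by phi, so c ~ b and hence c = psi b, i.e. a = b. *)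

Section Distance.

Variables (T : finType) (e : rel T).

Lemma walkn0 u v : walkn e 0 u v = (u == v).
Proof.
apply/existsP/idP => [[p /andP[_ /eqP <-]]|/eqP <-]; first by rewrite tuple0.
by exists [tuple]; rewrite /= eqxx.
Qed.

Lemma walknS n u v : walkn e n.+1 u v = [exists w, e u w && walkn e n w v].
Proof.
apply/existsP/existsP => [[p]|[w /andP[euw /existsP[p /andP[pp lp]]]]].
  case/tupleP: p => a p /= /andP[/andP[eua pp] lp].
  by exists a; rewrite eua; apply/existsP; exists p; rewrite pp.
by exists [tuple of w :: p]; rewrite /= euw pp.
Qed.

Lemma walkn_dist_le n u v : walkn e n u v -> dist e u v <= n.
Proof.
move=> W; rewrite /dist; case: (ltnP n #|T|) => n_lt.
  by rewrite leqNgt; apply/negP => /(before_find 0); rewrite nth_iota // add0n W.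
by apply: leq_trans (find_size _ _) _; rewrite size_iota.
Qed.

Lemma distxx u : dist e u u = 0.
Proof. by apply/eqP; rewrite -leqn0; apply: walkn_dist_le; rewrite walkn0. Qed.

Lemma edge_dist_le1 u v : e u v -> dist e u v <= 1.
Proof.
move=> euv; apply: walkn_dist_le; rewrite walknS.
by apply/existsP; exists v; rewrite euv walkn0 eqxx.
Qed.

Lemma ball1_center z : z \in ball1 e z.
Proof. by rewrite inE distxx. Qed.

Lemma ball1_edge v z : e v z -> v \in ball1 e z.
Proof. by rewrite inE; apply: edge_dist_le1. Qed.

Hypothesis hconn : connected e.

Lemma dist_walkn u v : walkn e (dist e u v) u v.
Proof.
case/connectP: (hconn u v) => p pp lp.
case/shortenP: pp lp => q qp uq _ lq.
have q_lt : size (u :: q) <= #|T| by rewrite -(card_uniqP uq) max_card.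
have Wq : walkn e (size q) u v.
  by apply/existsP; exists (in_tuple q); rewrite /= qp -lq eqxx.
have has_walk : has (fun n => walkn e n u v) (iota 0 #|T|).
  by apply/hasP; exists (size q); rewrite ?mem_iota.
by have := nth_find 0 has_walk; rewrite nth_iota ?add0n // -{2}(size_iota 0 #|T|) -has_find.
Qed.

Lemma dist_eq0 u v : dist e u v = 0 -> u = v.
Proof. by move=> d0; have := dist_walkn u v; rewrite d0 walkn0 => /eqP. Qed.

Lemma dist_eq1 u v : dist e u v = 1 -> e u v.
Proof.
move=> d1; have := dist_walkn u v; rewrite d1 walknS.
by case/existsP => w /andP[euw]; rewrite walkn0 => /eqP <-.
Qed.

Lemma dist_edge_leS u v w : e u v -> dist e u w <= (dist e v w).+1.
Proof.
move=> euv; apply: walkn_dist_le; rewrite walknS.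
by apply/existsP; exists v; rewrite euv dist_walkn.
Qed.

Lemma dist_geodesic u v k : dist e u v = k.+1 -> exists2 w, e u w & dist e w v = k.
Proof.
move=> duv; have := dist_walkn u v; rewrite duv walknS => /existsP[w /andP[euw Ww]].
exists w => //; apply/eqP; rewrite eqn_leq walkn_dist_le //=.
by rewrite -ltnS -duv dist_edge_leS.
Qed.

Lemma dist_gt1 u v : u != v -> ~~ e u v -> 1 < dist e u v.
Proof.
move=> neq_uv nuv; case duv: (dist e u v) => [|[|n]] //.
  by rewrite (dist_eq0 duv) eqxx in neq_uv.
by rewrite (dist_eq1 duv) in nuv.
Qed.

Lemma Vside_edge u v w : e u v -> u != w -> ~~ e u w -> u \in Vside e v w.
Proof.
by move=> euv neq_uw nuw; rewrite inE (leq_ltn_trans (edge_dist_le1 euv)) ?dist_gt1.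
Qed.

End Distance.

Section Sides.

Variables (T : finType) (e : rel T).

Lemma Vside_asym x y u : u \in Vside e x y -> u \notin Vside e y x.
Proof. by rewrite !inE -leqNgt; apply: ltnW. Qed.

Lemma VmidE x y u :
  (u \in Vmid e x y) = (u \notin Vside e x y) && (u \notin Vside e y x).
Proof. by rewrite !inE -!leqNgt eqn_leq andbC. Qed.

Lemma parallel_sym x y x' y' : parallel e x y x' y' <-> parallel e y x y' x'.
Proof. by split=> [[]|[]]. Qed.

End Sides.

Section Reflection.

Variables (T : finType) (e : rel T) (x y : T) (phi : T -> T).
Hypothesis hphi : reflection e x y phi.

Lemma reflection_adj u v : e (phi u) (phi v) = e u v.
Proof. by case: hphi => [[_ ->]]. Qed.

Lemma reflectionK : involutive phi.
Proof. by case: hphi. Qed.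

Lemma reflection_xy : phi x = y.
Proof. by case: hphi. Qed.

Lemma reflection_Vside u : u \in Vside e x y -> phi u \in Vside e y x.
Proof. by case: hphi => _ _ _ [_ side] _; apply: side. Qed.

Lemma reflection_cross u v :
  u \in Vside e x y -> v \in Vside e y x -> e u v -> v = phi u.
Proof. by case: hphi => _ _ _ [cross _] _ uS vS; rewrite cross // => /eqP. Qed.

Lemma reflection_edge u : u \in Vside e x y -> e u (phi u).
Proof. by case: hphi => _ _ _ [cross _] _ uS; rewrite cross ?reflection_Vside. Qed.

Lemma reflection_Vmid v : v \in Vmid e x y -> phi v = v.
Proof. by case: hphi => _ _ _ _; apply. Qed.

Lemma parallel_reflection u : u \in Vside e x y -> parallel e x y u (phi u).
Proof. by move=> uS; split; rewrite ?reflection_Vside. Qed.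

End Reflection.

Section MidNeighbour.

Variables (T : finType) (e : rel T).
Hypotheses (esym : symmetric e) (eirr : irreflexive e).
Hypotheses (hconn : connected e) (hrefl : reflective e).
Variables (x y : T).
Hypothesis hxy : e x y.

Lemma Vmid_edge_Vside_step w z a :
  e z w -> w \in Vmid e x y -> z \in Vmid e x y -> e w a -> a \in Vside e x y ->
  exists2 c, e z c & c \in Vside e x y.
Proof.
move=> ezw wmid zmid ewa aS.
have [eza|nza] := boolP (e z a); first by exists a.
have [phi hphi] := hrefl hxy.
set b := phi a.
have bS : b \in Vside e y x := reflection_Vside hphi aS.
have eab : e a b := reflection_edge hphi aS.
have ewb : e w b by rewrite -(reflection_Vmid hphi wmid) (reflection_adj hphi).
have nzb : ~~ e z b by rewrite -(reflection_Vmid hphi zmid) (reflection_adj hphi).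
have neq_az : a != z by apply: contraTneq aS => ->; move: zmid; rewrite VmidE => /andP[].
have neq_bz : b != z by apply: contraTneq bS => ->; move: zmid; rewrite VmidE => /andP[].
have aW : a \in Vside e w z by rewrite Vside_edge // (esym a).
have bW : b \in Vside e w z by rewrite Vside_edge // (esym b).
have [psi hpsi] : exists psi, reflection e w z psi by apply: hrefl; rewrite esym.
set c := psi a.
have ezc : e z c by rewrite -(reflection_xy hpsi) (reflection_adj hpsi).
have [cS|ncS] := boolP (c \in Vside e x y); first by exists c.
have cW : c \in Vside e z w := reflection_Vside hpsi aW.
have ncS' : c \notin Vside e y x.
  apply: contraTN cW => cS'; rewrite (reflection_cross hphi aS cS' (reflection_edge hpsi aW)).
  exact: Vside_asym bW.
have cmid : c \in Vmid e x y by rewrite VmidE ncS.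
have ebc : e b c.
  by rewrite -(reflection_Vmid hphi cmid) (reflection_adj hphi) (reflection_edge hpsi aW).
have psi_ab : psi a = psi b by rewrite -(reflection_cross hpsi bW cW ebc).
by rewrite (inv_inj (reflectionK hpsi) psi_ab) eirr in eab.
Qed.

Lemma Vmid_edge_Vside z :
  z \in Vmid e x y -> exists2 c, e z c & c \in Vside e x y.
Proof.
move=> zmid; move dzx: (dist e z x) => k.
elim: k z dzx zmid => [|k IH] z dzx zmid.
  move: zmid; rewrite inE (dist_eq0 hconn dzx) distxx eq_sym => /eqP/(dist_eq0 hconn) eq_xy.
  by move: hxy; rewrite eq_xy eirr.
have [w ezw dwx] := dist_geodesic hconn dzx.
have dwy : k <= dist e w y.
  by move: (zmid); rewrite inE dzx -ltnS => /eqP ->; apply: dist_edge_leS.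
have [k_lt|dwy_le] := ltnP k (dist e w y); first by exists w; rewrite // inE dwx.
have wmid : w \in Vmid e x y by rewrite inE dwx eqn_leq dwy_le dwy.
have [a ewa aS] := IH w dwx wmid.
exact: Vmid_edge_Vside_step ezw wmid zmid ewa aS.
Qed.

End MidNeighbour.

Lemma parallel_ball1_Vside (T : finType) (e : rel T)
  (esym : symmetric e) (hrefl : reflective e) (x y z : T) :
  e x y -> z \in Vside e x y ->
  exists x' y' : T,
    [/\ x' \in ball1 e z, y' \in ball1 e z, e x' y' & parallel e x y x' y'].
Proof.
move=> /hrefl[phi hphi] zS; exists z, (phi z).
have ezphi : e z (phi z) := reflection_edge hphi zS.
split; [exact: ball1_center | by rewrite ball1_edge // esym | by [] |].
exact (parallel_reflection hphi zS).
Qed.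

Theorem lemma2p4 (T : finType) (e : rel T)
  (esym : symmetric e) (eirr : irreflexive e)
  (hconn : connected e) (hrefl : reflective e)
  (x y z : T) (hxy : e x y) :
  exists x' y' : T,
    [/\ x' \in ball1 e z, y' \in ball1 e z, e x' y' & parallel e x y x' y'].
Proof.
have [zS|nzS] := boolP (z \in Vside e x y); first exact: parallel_ball1_Vside.
have [zS'|nzS'] := boolP (z \in Vside e y x).
  have eyx : e y x by rewrite esym.
  have [y' [x' [by' bx' ey'x' par]]] := parallel_ball1_Vside esym hrefl eyx zS'.
  by exists x', y'; split; rewrite 1?esym //; apply/parallel_sym.
have zmid : z \in Vmid e x y by rewrite VmidE nzS.
have [c ezc cS] := Vmid_edge_Vside esym eirr hconn hrefl hxy zmid.
have [phi hphi] := hrefl _ _ hxy.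
exists c, (phi c); split.
- by rewrite ball1_edge // esym.
- by rewrite ball1_edge // -(reflection_Vmid hphi zmid) (reflection_adj hphi) esym.
- exact (reflection_edge hphi cS).
- exact (parallel_reflection hphi cS).
Qed.
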